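(* Let $X$ be a real Banach space, $F$ a non-empty closed bounded subset of $X$, and $x\in X$ with $Q_F(x)\neq\emptyset$. The following are equivalent. (1) $F$ is sup-compact at $x$. (2) $Q_F(x)$ is compact and $Q_F(x,\frac1n)\xrightarrow{V}Q_F(x)$. (3) $Q_F(x)$ is compact and $Q_F(x,\frac1n)\xrightarrow{H}Q_F(x)$. (4) $Q_F(x)$ is compact and $F$ is strongly remotal at $x$. (5) $\alpha(Q_F(x,\frac1n))\to0$.
   Context: $B_X$ is the closed unit ball. $r(F,x)=\sup_{y\in F}\|x-y\|$, $Q_F(x,\delta)=\{y\in F:\|x-y\|\ge r(F,x)-\delta\}$ for $\delta\ge0$, $Q_F(x)=Q_F(x,0)$. $F$ is sup-compact at $x$ if every sequence $(y_n)$ in $F$ with $\|x-y_n\|\to r(F,x)$ has a subsequence converging to an element of $F$. $F$ is strongly remotal at $x$ if for every $\epsilon>0$ there is $\delta>0$ with $Q_F(x,\delta)\subseteq Q_F(x)+\epsilon B_X$. For closed bounded sets $C_n,C_0$: $C_n\xrightarrow{V}C_0$ means both (a) for every open $U\supseteq C_0$, eventually $C_n\subseteq U$, and (b) for every open $U$ with $C_0\cap U\ne\emptyset$, eventually $C_n\cap U\neq\emptyset$; $C_n\xrightarrow{H}C_0$ means for every $\epsilon>0$, eventually $C_n\subseteq C_0+\epsilon B_X$ and $C_0\subseteq C_n+\epsilon B_X$. $\alpha(A)=\inf\{\epsilon>0:A\subseteq E+\epsilon B_X$ for some finite $E\subseteq X\}$. *)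

From HB Require Import structures.
From mathcomp Require Import all_boot all_order all_algebra.
From mathcomp Require Import all_classical all_reals all_analysis.
Set Implicit Arguments. Unset Strict Implicit. Unset Printing Implicit Defensive.
Import Order.TTheory GRing.Theory Num.Theory.
Import numFieldNormedType.Exports.
Local Open Scope classical_set_scope.
Local Open Scope ring_scope.

Section Defs.
Context {R : realType} {X : normedModType R}.

Definition farthest_radius (F : set X) (x : X) : R :=
  sup [set `|x - y| | y in F].

Definition Qset (F : set X) (x : X) (delta : R) : set X :=
  [set y | F y /\ farthest_radius F x - delta <= `|x - y|].

Definition sup_compact_at (F : set X) (x : X) : Prop :=
  forall u : nat -> X, (forall n, F (u n)) ->
    (fun n => `|x - u n|) @ \oo --> farthest_radius F x ->
    exists phi : nat -> nat, {homo phi : m n / (m < n)%N >-> (m < n)%N} /\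
      exists2 y, F y & (fun n => u (phi n)) @ \oo --> y.

Definition enlarge (A : set X) (e : R) : set X :=
  [set z | exists2 a, A a & `|z - a| <= e].

Definition strongly_remotal_at (F : set X) (x : X) : Prop :=
  forall eps : R, 0 < eps -> exists2 delta : R, 0 < delta &
    Qset F x delta `<=` enlarge (Qset F x 0) eps.

Definition vietoris_cvg (C : nat -> set X) (C0 : set X) : Prop :=
  (forall U : set X, open U -> C0 `<=` U -> \forall n \near \oo, C n `<=` U) /\
  (forall U : set X, open U -> C0 `&` U !=set0 ->
     \forall n \near \oo, C n `&` U !=set0).

Definition hausdorff_cvg (C : nat -> set X) (C0 : set X) : Prop :=
  forall eps : R, 0 < eps -> \forall n \near \oo,
    C n `<=` enlarge C0 eps /\ C0 `<=` enlarge (C n) eps.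

Definition kuratowski_alpha (A : set X) : R :=
  inf [set e : R | 0 < e /\ exists E : set X, finite_set E /\ A `<=` enlarge E e].

End Defs.

From HB Require Import structures.
From mathcomp Require Import all_boot all_order all_algebra.
From mathcomp Require Import all_classical all_reals all_analysis.
From mathcomp Require Import unstable finmap.
Import Order.TTheory GRing.Theory Num.Theory.
Import numFieldNormedType.Exports.
Local Open Scope classical_set_scope.
Local Open Scope ring_scope.

(* A sequence in F is maximising for x exactly when it eventually enters each
   of the sets Q_F(x, 1/n), which decrease to Q_F(x).  If F is sup-compact at
   x, an e-separated sequence whose n-th term lies in Q_F(x, 1/n) would be
   maximising without a convergent subsequence, so alpha(Q_F(x, 1/n)) -> 0.
   Conversely, if alpha(Q_F(x, 1/n)) -> 0, the tail filter of a maximising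
   sequence is totally bounded, so in the complete space X it has a cluster
   point, hence a convergent subsequence; for the same reason Q_F(x) is
   compact.  Sup-compactness also pushes the Q_F(x, 1/n) into any open
   neighbourhood of Q_F(x) (upper Vietoris convergence), which yields
   Hausdorff convergence and strong remotality, and a compact Q_F(x) together
   with strong remotality brings alpha(Q_F(x, 1/n)) back to 0. *)

Local Notation Qn F x n := (Qset F x (n.+1%:R)^-1).

Section total_boundedness.
Context {R : realType} {X : normedModType R}.
Implicit Types (A E : set X) (e : R).

Definition totally_bounded A :=
  forall e, 0 < e -> exists2 E, finite_set E & A `<=` enlarge E e.

Lemma enlargeS {A E e} : A `<=` E -> enlarge A e `<=` enlarge E e.
Proof. by move=> AE z [a Aa za]; exists a => //; apply: AE. Qed.

Lemma enlarge_enlarge {A} {e1 e2 : R} :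
  enlarge (enlarge A e1) e2 `<=` enlarge A (e1 + e2).
Proof.
move=> z [b [a Aa ba] zb]; exists a => //.
by rewrite (le_trans (ler_distD b _ _))// addrC lerD.
Qed.

Lemma compact_totally_bounded {A} : compact A -> totally_bounded A.
Proof.
rewrite compact_cover => cA e e0.
have [D _ AD] : finite_subset_cover A (fun c => ball c e) A.
  apply: cA => [c _|z Az]; first exact: ball_open.
  by exists z => //; exact: ballxx.
exists [set` D]; first exact: finite_fset.
move=> z /AD [c Dc]; rewrite -ball_normE /= distrC => /ltW.
by exists c.
Qed.

Lemma kuratowski_alpha_ge0 A : 0 <= kuratowski_alpha A.
Proof.
rewrite /kuratowski_alpha; set S := [set e : R | _].
have [[e Se]|S0] := pselect (S !=set0).
  by apply: lb_le_inf; [exists e | move=> d [/ltW]].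
by rewrite (_ : S = set0) ?inf0// -subset0 => e Se; apply: S0; exists e.
Qed.

Lemma kuratowski_alpha_le A E e : 0 < e -> finite_set E ->
  A `<=` enlarge E e -> kuratowski_alpha A <= e.
Proof.
move=> e0 fE AE; apply: ge_inf; last by split => //; exists E.
by exists 0 => y [/ltW].
Qed.

Lemma kuratowski_alpha_lt A e : bounded_set A -> kuratowski_alpha A < e ->
  exists2 E, finite_set E & A `<=` enlarge E e.
Proof.
move=> /pinfty_ex_gt0[M M0 AM] /inf_lt[].
  exists M; split => //; exists [set 0]; split; first exact: finite_set1.
  by move=> z Az; exists 0 => //; rewrite subr0 AM.
move=> d [d0 [E [fE AE]]] de; exists E => // z /AE [a Ea za].
by exists a => //; rewrite (le_trans za)// ltW.
Qed.

Lemma kuratowski_alpha_cvg0_of_cover {A : nat -> set X} :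
  (forall m n, (m <= n)%N -> A n `<=` A m) ->
  (forall e, 0 < e -> exists N, exists2 E, finite_set E & A N `<=` enlarge E e) ->
  (fun n => kuratowski_alpha (A n)) @ \oo --> 0.
Proof.
move=> Adecr Acover; apply/cvgrPdist_le => e e0.
have [N [E fE AE]] := Acover e e0.
exists N => // n /= Nn; rewrite sub0r normrN ger0_norm ?kuratowski_alpha_ge0//.
exact: kuratowski_alpha_le e0 fE (subset_trans (Adecr _ _ Nn) AE).
Qed.

Lemma kuratowski_alpha_cvg0_cover {A : nat -> set X} :
  (forall n, bounded_set (A n)) ->
  (fun n => kuratowski_alpha (A n)) @ \oo --> 0 ->
  forall e, 0 < e -> exists N, exists2 E, finite_set E & A N `<=` enlarge E e.
Proof.
move=> Abd /cvgrPdist_lt Acvg e e0; have [N _ AN] := Acvg e e0.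
exists N; apply: kuratowski_alpha_lt (Abd N) _.
by have := AN N (leqnn N); rewrite sub0r normrN ger0_norm ?kuratowski_alpha_ge0.
Qed.

End total_boundedness.

Lemma vietoris_hausdorff_cvg {R : realType} {X : normedModType R}
    {C : nat -> set X} {C0 : set X} :
  (forall n, C0 `<=` C n) -> vietoris_cvg C C0 -> hausdorff_cvg C C0.
Proof.
move=> C0C [Cupper _] e e0.
have oC0e : open (\bigcup_(a in C0) ball a e).
  by apply: bigcup_open => a _; exact: ball_open.
have C0_C0e : C0 `<=` \bigcup_(a in C0) ball a e.
  by move=> a C0a; exists a => //; exact: ballxx.
apply: filterS (Cupper _ oC0e C0_C0e) => n Cn_C0e; split.
  move=> z /Cn_C0e[a C0a]; rewrite -ball_normE /= distrC => /ltW.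
  by exists a.
by move=> z C0z; exists z; [exact: C0C | rewrite subrr normr0 ltW].
Qed.

Section sequences.
Context {R : realType} {X : normedModType R}.

Lemma cluster_subseq {u : nat -> X} {a : X} : cluster (u @ \oo) a ->
  exists2 phi : nat -> nat, {homo phi : m n / (m < n)%N} &
    (fun n => u (phi n)) @ \oo --> a.
Proof.
move=> ua; pose v n := `|a - u n|.
have /cluster_eventually_cvg[phi phiS vphi] : cluster (v @ \oo) 0.
  apply/cluster_eventuallyP => e n e0.
  have uA : (u @ \oo) (u @` [set p | (n <= p)%N]).
    by exists n => // p np; exists p.
  have [_ [[p np <-]]] := ua _ _ uA (nbhsx_ballx a e e0).
  rewrite -ball_normE /= => /ltW uae.
  by exists p => //; rewrite sub0r normrN normr_id.
exists phi; first by move=> m n; rewrite !ltnNge -!leEnat phiS.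
apply/cvgrPdist_le => e e0; move/cvgrPdist_le: vphi => /(_ e e0).
by apply: filterS => n; rewrite /= sub0r normrN normr_id.
Qed.

(* [greedy_prefix g k] lists, latest first, the first k terms of the sequence
   defined by [y j = g j (greedy_prefix g j)]. *)
Fixpoint greedy_prefix (g : nat -> seq X -> X) (k : nat) : seq X :=
  if k is k'.+1 then g k' (greedy_prefix g k') :: greedy_prefix g k' else [::].

Lemma greedy_prefix_mem g (j k : nat) : (j < k)%N ->
  g j (greedy_prefix g j) \in greedy_prefix g k.
Proof.
elim: k => // k ih; rewrite ltnS leq_eqVlt => /orP[/eqP->|jk] /=.
  by rewrite in_cons eqxx.
by rewrite in_cons ih ?orbT.
Qed.

Lemma exists_separated_seq (P : nat -> set X) (e : R) :
  (forall n (s : seq X), exists2 y, P n y & forall c, c \in s -> e < `|y - c|) ->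
  exists2 y : nat -> X, (forall n, P n (y n)) &
    forall j k, (j < k)%N -> e < `|y k - y j|.
Proof.
move=> Pfar.
have /choice[g gP] : forall n, exists gn : seq X -> X,
    forall s, P n (gn s) /\ forall c, c \in s -> e < `|gn s - c|.
  move=> n; have Pfar_n (s : seq X) :
      exists y, P n y /\ forall c, c \in s -> e < `|y - c|.
    by have [y Py yfar] := Pfar n s; exists y.
  by have [gn gnP] := choice Pfar_n; exists gn.
exists (fun k => g k (greedy_prefix g k)) => [n|j k jk]; first exact: (gP _ _).1.
exact/(gP _ _).2/greedy_prefix_mem.
Qed.

Lemma separated_subseq_not_cvg (y : nat -> X) (e : R) (phi : nat -> nat) (a : X) :
  0 < e -> (forall j k, (j < k)%N -> e < `|y k - y j|) ->
  {homo phi : m n / (m < n)%N} -> ~ (fun n => y (phi n)) @ \oo --> a.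
Proof.
move=> e0 ysep phiS /cvgrPdist_lt/(_ (e / 2))[|M _ ya]; first by rewrite divr_gt0.
have := ysep _ _ (phiS M M.+1 (ltnSn M)); rewrite ltNge => /negP; apply.
rewrite (le_trans (ler_distD a _ _))// [e](splitr e) distrC.
by rewrite lerD// ltW//; apply: ya => /=.
Qed.

End sequences.

Lemma ultra_bigcup_finite {I : eqType} {T : Type} (U : set_system T)
    (P : I -> set T) (E : set I) : UltraFilter U -> finite_set E ->
  U (\bigcup_(i in E) P i) -> exists2 i, E i & U (P i).
Proof.
move=> UU /finite_seqP[s ->]; elim: s => [|i s ih] UP.
  exfalso; apply: (@filter_not_empty _ U).
  by apply: filterS UP => z [i /=]; rewrite in_nil.
have [Ui|/(filterI UP)UPi] := in_ultra_setVsetC (P i) UU.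
  by exists i => //=; rewrite mem_head.
have [j sj Uj] : exists2 j, [set` s] j & U (P j).
  apply: ih; apply: filterS UPi => z [[j /= + Pjz] Piz].
  by rewrite in_cons => /orP[/eqP ji|sj]; [rewrite ji in Pjz|exists j].
by exists j => //=; rewrite in_cons sj orbT.
Qed.

Section complete.
Context {R : realType} {X : completeNormedModType R}.

Lemma totally_bounded_filter_cluster (G : set_system X) : ProperFilter G ->
  (forall e : R, 0 < e -> exists2 E, finite_set E & G (enlarge E e)) ->
  exists l, cluster G l.
Proof.
move=> PG Gtb; have [U [UU GU]] := ultraFilterLemma PG.
(* An ultrafilter finer than G picks one of the finitely many small balls. *)
have : cauchy U.
  apply: cauchy_exP => e e0.
  have [E fE GE] := Gtb (e / 2) (divr_gt0 e0 (ltr0Sn _ 1)).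
  pose cball (c : X) := [set z | `|z - c| <= e / 2].
  have [c _ Uc] := ultra_bigcup_finite U cball E UU fE (GU _ GE).
  exists c; apply: filterS Uc => z /= zc; rewrite -ball_normE /= distrC.
  by rewrite (le_lt_trans zc)// ltr_pdivrMr// ltr_pMr// ltr1n.
move=> /cauchy_cvg Ucvg; exists (lim U); rewrite cluster_cvgE.
by exists U; [exact: ultra_proper|split].
Qed.

Lemma closed_totally_bounded_compact (A : set X) :
  closed A -> totally_bounded A -> compact A.
Proof.
move=> cA Atb G PG GA.
have [|l Gl] := totally_bounded_filter_cluster G.
  by move=> e /Atb[E fE AE]; exists E => //; exact: filterS AE GA.
by exists l; split => //; apply: cA => B lB; exact: Gl _ _ GA lB.
Qed.

End complete.

Section farthest_points.
Context {R : realType} {X : normedModType R}.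
Variables (F : set X) (x : X).
Hypotheses (bF : bounded_set F) (cF : closed F).
Implicit Types (d : R) (y : X).

Lemma dist_le_farthest_radius y : F y -> `|x - y| <= farthest_radius F x.
Proof.
move=> Fy; have [M _ FM] := pinfty_ex_gt0 bF.
apply: sup_upper_bound; last by exists y.
split; first by exists `|x - y|, y.
exists (`|x| + M) => _ [z Fz <-].
by rewrite (le_trans (ler_normB _ _))// lerD2l FM.
Qed.

Lemma Qset_subset d : Qset F x d `<=` F.
Proof. by move=> y []. Qed.

Lemma bounded_Qset d : bounded_set (Qset F x d).
Proof.
by case: bF => M [Mr FM]; exists M; split => // N MN y /Qset_subset; exact: FM.
Qed.

Lemma le_Qset {d d' : R} : d <= d' -> Qset F x d `<=` Qset F x d'.
Proof. by move=> dd' y [Fy Fxy]; split => //; rewrite (le_trans _ Fxy)// lerB. Qed.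

Lemma Qn_subset {m n : nat} : (m <= n)%N -> Qn F x n `<=` Qn F x m.
Proof. by move=> mn; apply: le_Qset; rewrite lef_pV2 ?posrE// ler_nat. Qed.

Lemma Qset0_subset_Qn (n : nat) : Qset F x 0 `<=` Qn F x n.
Proof. exact: le_Qset. Qed.

Lemma closed_Qset d : closed (Qset F x d).
Proof.
have -> : Qset F x d =
    F `&` (fun z => `|x - z|) @^-1` [set t | farthest_radius F x - d <= t].
  by apply/seteqP; split => z [].
apply: closedI => //; apply: preimage_closed; last exact: closed_ge.
by move=> z _; apply: cvg_norm; apply: cvgB => //; exact: cvg_cst.
Qed.

Lemma Qset0_Qn y : (forall n, Qn F x n y) -> Qset F x 0 y.
Proof.
move=> Qy; split; first exact: (Qy 0%N).1.
rewrite subr0; apply/ler_addgt0Pr => e e0.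
have [n] := ltr_add_invr e0; rewrite add0r => /ltW ne.
by rewrite -lerBlDr (le_trans _ (Qy n).2)// lerB.
Qed.

Lemma Qn_cvg_farthest_radius {y : nat -> X} : (forall n, Qn F x n (y n)) ->
  (fun n => `|x - y n|) @ \oo --> farthest_radius F x.
Proof.
move=> Qy; apply/cvgrPdist_le => e e0.
have [k] := ltr_add_invr e0; rewrite add0r => /ltW ke.
exists k => // n /= kn; have /(Qn_subset kn)[Fyn Fxy] := Qy n.
rewrite ger0_norm ?subr_ge0 ?dist_le_farthest_radius// lerBlDr -lerBlDl.
by rewrite (le_trans _ Fxy)// lerB.
Qed.

Lemma cvg_farthest_radius_near_Qset (u : nat -> X) d : 0 < d ->
  (forall n, F (u n)) -> (fun n => `|x - u n|) @ \oo --> farthest_radius F x ->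
  \forall n \near \oo, Qset F x d (u n).
Proof.
move=> d0 Fu /cvgrPdist_le/(_ d d0); apply: filterS => n /= ud; split => //.
by rewrite lerBlDr -lerBlDl (le_trans (ler_norm _) ud).
Qed.

Lemma Qn_subseq_limit {y : nat -> X} {phi : nat -> nat} {a : X} :
  {homo phi : m n / (m < n)%N} -> (forall n, Qn F x n (y n)) ->
  (fun n => y (phi n)) @ \oo --> a -> Qset F x 0 a.
Proof.
move=> phiS Qy ya; apply: Qset0_Qn => k.
apply: (closed_cvg _ (closed_Qset _) _ _ ya); exists k => // n /= kn.
by apply/(Qn_subset _ _ (Qy _))/(leq_trans kn)/mono_leq_infl/leq_mono.
Qed.

Lemma sup_compact_kuratowski_Qn_cvg0 : sup_compact_at F x ->
  (fun n => kuratowski_alpha (Qn F x n)) @ \oo --> 0.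
Proof.
move=> scF; apply: kuratowski_alpha_cvg0_of_cover => [m n|e e0].
  exact: Qn_subset.
apply: contrapT => noCover.
have [y Qy ysep] : exists2 y : nat -> X, (forall n, Qn F x n (y n)) &
    forall j k, (j < k)%N -> e < `|y k - y j|.
  apply: (exists_separated_seq (fun n => Qn F x n)) => n s.
  apply: contrapT => nofar; apply: noCover.
  exists n, [set` s]; first exact: finite_seq.
  move=> z Qz; apply: contrapT => zfar; apply: nofar; exists z => // c cs.
  by rewrite ltNge; apply/negP => zc; apply: zfar; exists c.
have [phi [phiS [a _ ya]]] :=
  scF y (fun n => (Qy n).1) (Qn_cvg_farthest_radius Qy).
exact: separated_subseq_not_cvg e0 ysep phiS ya.
Qed.

Lemma sup_compact_vietoris : sup_compact_at F x ->
  vietoris_cvg (fun n => Qn F x n) (Qset F x 0).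
Proof.
move=> scF; split=> [U oU QU|U _ [z [Qz Uz]]]; last first.
  by apply: nearW => n; exists z; split => //; exact: Qset0_subset_Qn.
apply: contrapT => QnU.
have /choice[y Qy] : forall n, exists y, Qn F x n y /\ ~ U y.
  move=> N; apply: contrapT => noy; apply: QnU.
  exists N => // n /= Nn z /(Qn_subset Nn) QNz.
  by apply: contrapT => Uz; apply: noy; exists z.
have [phi [phiS [a _ ya]]] :=
  scF y (fun n => (Qy n).1.1) (Qn_cvg_farthest_radius (fun n => (Qy n).1)).
have Qa := Qn_subseq_limit phiS (fun n => (Qy n).1) ya.
apply: (closed_cvg _ (open_closedC oU) _ _ ya) (QU _ Qa).
by apply: nearW => n; exact: (Qy _).2.
Qed.

Lemma hausdorff_strongly_remotal :
  hausdorff_cvg (fun n => Qn F x n) (Qset F x 0) -> strongly_remotal_at F x.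
Proof.
move=> QH e e0; have [N _ QN] := QH e e0.
by exists N.+1%:R^-1 => //; exact: (QN N (leqnn N)).1.
Qed.

Lemma strongly_remotal_kuratowski_Qn_cvg0 : compact (Qset F x 0) ->
  strongly_remotal_at F x -> (fun n => kuratowski_alpha (Qn F x n)) @ \oo --> 0.
Proof.
move=> cQ srF; apply: kuratowski_alpha_cvg0_of_cover => [m n|e e0].
  exact: Qn_subset.
have e20 : 0 < e / 2 by rewrite divr_gt0.
have [E fE QE] := compact_totally_bounded cQ _ e20.
have [d d0 Qd] := srF _ e20.
have [N] := ltr_add_invr d0; rewrite add0r => /ltW Nd.
exists N, E => // z /(le_Qset Nd)/Qd/(enlargeS QE)/enlarge_enlarge.
by rewrite -splitr.
Qed.

End farthest_points.

Section complete_space.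
Context {R : realType} {X : completeNormedModType R}.
Variables (F : set X) (x : X).
Hypotheses (bF : bounded_set F) (cF : closed F)
  (alpha0 : (fun n => kuratowski_alpha (Qn F x n)) @ \oo --> 0).

Let Qcover :=
  kuratowski_alpha_cvg0_cover (fun n => bounded_Qset F x bF _) alpha0.

Lemma kuratowski_Qn_cvg0_compact : compact (Qset F x 0).
Proof.
apply: closed_totally_bounded_compact; first exact: closed_Qset.
move=> e e0; have [N [E fE QE]] := Qcover e e0.
by exists E => //; apply: subset_trans QE; exact: Qset0_subset_Qn.
Qed.

Lemma kuratowski_Qn_cvg0_sup_compact : sup_compact_at F x.
Proof.
move=> u Fu ur.
have [|l ul] := totally_bounded_filter_cluster (u @ \oo).
  move=> e e0; have [N [E fE QE]] := Qcover e e0; exists E => //.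
  have QNu : \forall n \near \oo, Qn F x N (u n).
    by apply: cvg_farthest_radius_near_Qset Fu ur; rewrite invr_gt0.
  by apply: filterS QNu => n /QE.
have [phi phiS uphi] := cluster_subseq ul; exists phi; split => //.
exists l => //; apply: (closed_cvg _ cF _ _ uphi).
by apply: nearW => n; exact: Fu.
Qed.

End complete_space.

Theorem theorem2p5 (R : realType) (X : completeNormedModType R)
  (F : set X) (x : X) :
  F !=set0 -> closed F -> bounded_set F -> Qset F x 0 !=set0 ->
  let QF := Qset F x 0 in
  let Qn := fun n : nat => Qset F x (n.+1%:R)^-1 in
  (sup_compact_at F x <-> (compact QF /\ vietoris_cvg Qn QF)) /\
  (sup_compact_at F x <-> (compact QF /\ hausdorff_cvg Qn QF)) /\
  (sup_compact_at F x <-> (compact QF /\ strongly_remotal_at F x)) /\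
  (sup_compact_at F x <-> (fun n => kuratowski_alpha (Qn n)) @ \oo --> (0 : R)).
Proof.
move=> _ cF bF _ QF Qn.
have sc_alpha := sup_compact_kuratowski_Qn_cvg0 F x bF.
have alpha_sc := kuratowski_Qn_cvg0_sup_compact F x bF cF.
have alpha_cpt := kuratowski_Qn_cvg0_compact F x bF cF.
have sc_V := sup_compact_vietoris F x bF cF.
have V_H := vietoris_hausdorff_cvg (Qset0_subset_Qn F x).
have H_SR := hausdorff_strongly_remotal F x.
have SR_alpha := strongly_remotal_kuratowski_Qn_cvg0 F x.
have sc_cpt : sup_compact_at F x -> compact QF by move=> /sc_alpha/alpha_cpt.
split; [|split; [|split]]; split.
- by move=> scF; split; [exact: sc_cpt | exact: sc_V].
- by move=> [cQ /V_H/H_SR/(SR_alpha cQ)/alpha_sc].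
- by move=> scF; split; [exact: sc_cpt | exact/V_H/sc_V].
- by move=> [cQ /H_SR/(SR_alpha cQ)/alpha_sc].
- by move=> scF; split; [exact: sc_cpt | exact/H_SR/V_H/sc_V].
- by move=> [cQ /(SR_alpha cQ)/alpha_sc].
- exact: sc_alpha.
- exact: alpha_sc.
Qed.
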